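(* Let $\mathcal{M}_i=(E_i,\rho_i)$, $i=1,2$, be $q$-matroids, $E=E_1\oplus E_2$ with projections $\pi_i:E\to E_i$, $\rho'_i(V)=\rho_i(\pi_i(V))$ for $V\le E$, and let $\rho$ be the rank function of $\mathcal{M}_1\oplus\mathcal{M}_2$. Define $\mathcal{X}=\{X\le E\mid \rho'_1(X)+\rho'_2(X)<\dim X\}$, $\mathcal{T}=\{X_1\oplus X_2\mid X_i\le E_i\}$, and for $V\le E$, $\mathcal{T}(V)=\{X_1\oplus X_2\mid X_i\le\pi_i(V)\}$. Then for every $V\le E$, \[ \rho(V)=\dim V+\min_{X\in\{0\}\cup\{X\in\mathcal{X}: X\le V\}}\big(\rho'_1(X)+\rho'_2(X)-\dim X\big) =\dim V+\min_{X\in\mathcal{T}}\big(\rho'_1(X)+\rho'_2(X)-\dim(X\cap V)\big) =\dim V+\min_{X\in\mathcal{T}(V)}\big(\rho'_1(X)+\rho'_2(X)-\dim(X\cap V)\big). \] As a consequence, $V$ is independent in $\mathcal{M}_1\oplus\mathcal{M}_2$ if and only if no subspace of $V$ lies in $\mathcal{X}$.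
   Context: Let $\mathbb{F}=\mathbb{F}_q$. A $q$-matroid is $\mathcal{M}=(E,\rho)$, $E$ a finite-dimensional $\mathbb{F}$-vector space, $\rho$ from subspaces to $\mathbb{Z}_{\ge0}$ with $0\le\rho(V)\le\dim V$, monotone and submodular; $V$ is independent if $\rho(V)=\dim V$. The direct sum $\mathcal{M}_1\oplus\mathcal{M}_2=(E,\rho)$ on $E=E_1\oplus E_2$ (each $E_i$ identified with its image) is defined by $\rho(V)=\dim V+\min_{X\le V}(\rho_1(\pi_1(X))+\rho_2(\pi_2(X))-\dim X)$. *)

From HB Require Import structures.
From mathcomp Require Import all_boot all_order all_algebra.
Set Implicit Arguments. Unset Strict Implicit. Unset Printing Implicit Defensive.
Import Order.TTheory GRing.Theory Num.Theory.
Local Open Scope ring_scope.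

(* Over a finite field, the subspaces of a finite-dimensional space form a
   finite type (subType of the finite matrix type). *)
Module FinVspace.
Import VectorInternalTheory.
HB.instance Definition _ (F : finFieldType) (vT : vectType F) :=
  [Finite of {vspace vT} by <:].
End FinVspace.
Export FinVspace.

Section QMatroid.
Variables (F : finFieldType) (vT : vectType F).

(* rank function axioms of a q-matroid (nonnegativity is automatic in nat) *)
Definition qmatroid (rho : {vspace vT} -> nat) : Prop :=
  [/\ forall V : {vspace vT}, (rho V <= \dim V)%N,
      forall V W : {vspace vT}, (V <= W)%VS -> (rho V <= rho W)%N &
      forall V W : {vspace vT}, (rho (V + W)%VS + rho (V :&: W)%VS <= rho V + rho W)%N].
End QMatroid.

(* minimum of f over {X | P X}; i0 is a witness of P (meaningful when P i0) *)
Definition minover (T : finType) (i0 : T) (P : pred T) (f : T -> int) : int :=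
  f (Order.arg_min i0 P f).

Section DirectSum.
Variables (F : finFieldType) (E1 E2 : vectType F).

Definition pi1 : 'Hom((E1 * E2)%type, E1) := linfun (fun x : E1 * E2 => x.1).
Definition pi2 : 'Hom((E1 * E2)%type, E2) := linfun (fun x : E1 * E2 => x.2).
Definition in1 : 'Hom(E1, (E1 * E2)%type) := linfun (fun x : E1 => (x, 0 : E2)).
Definition in2 : 'Hom(E2, (E1 * E2)%type) := linfun (fun x : E2 => (0 : E1, x)).

Variables (rho1 : {vspace E1} -> nat) (rho2 : {vspace E2} -> nat).

Definition rho1' (V : {vspace E1 * E2}) : nat := rho1 (pi1 @: V)%VS.
Definition rho2' (V : {vspace E1 * E2}) : nat := rho2 (pi2 @: V)%VS.

Definition dsum_rank (V : {vspace E1 * E2}) : int :=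
  (\dim V)%:Z + minover 0%VS (fun X => (X <= V)%VS)
      (fun X => (rho1' X + rho2' X)%:Z - (\dim X)%:Z).

Definition dsum_indep (V : {vspace E1 * E2}) : Prop := dsum_rank V = (\dim V)%:Z.

Definition calX : pred {vspace E1 * E2} :=
  fun X => (rho1' X + rho2' X < \dim X)%N.

Definition dsumv (X1 : {vspace E1}) (X2 : {vspace E2}) : {vspace E1 * E2} :=
  (in1 @: X1 + in2 @: X2)%VS.

Definition calT : pred {vspace E1 * E2} :=
  fun X => [exists X1 : {vspace E1}, exists X2 : {vspace E2}, X == dsumv X1 X2].

Definition calTV (V : {vspace E1 * E2}) : pred {vspace E1 * E2} :=
  fun X => [exists X1 : {vspace E1}, exists X2 : {vspace E2},
    [&& (X1 <= pi1 @: V)%VS, (X2 <= pi2 @: V)%VS & X == dsumv X1 X2]].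

End DirectSum.

(** Replacing a subspace Y <= V by the smallest X1 (+) X2 containing it, its
   hull pi1(Y) (+) pi2(Y), keeps both projections and can only enlarge the
   intersection with V; conversely any X competes no better than X cap V, whose
   projections are smaller.  A subspace of V outside the family X has
   nonnegative defect, as has 0, so it may be dropped; and V is independent
   exactly when no subspace of V has negative defect. *)
From HB Require Import structures.
From mathcomp Require Import all_boot all_order all_algebra.
Set Implicit Arguments. Unset Strict Implicit. Unset Printing Implicit Defensive.
Import Order.TTheory GRing.Theory Num.Theory.
Local Open Scope ring_scope.

Section MinOver.
Variable T : finType.

Lemma minover_le (i0 j : T) (P : pred T) (f : T -> int) :
  P i0 -> P j -> minover i0 P f <= f j.
Proof. by move=> Pi0 Pj; rewrite /minover; case: arg_minP => // i _; apply. Qed.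

Lemma minover_mem (i0 : T) (P : pred T) (f : T -> int) :
  P i0 -> exists2 j, P j & minover i0 P f = f j.
Proof. by move=> Pi0; rewrite /minover; case: arg_minP => // i Pi _; exists i. Qed.

Lemma eq_minover (i0 j0 : T) (P Q : pred T) (f g : T -> int) :
  P i0 -> Q j0 ->
  (forall i, P i -> exists2 j, Q j & g j <= f i) ->
  (forall j, Q j -> exists2 i, P i & f i <= g j) ->
  minover i0 P f = minover j0 Q g.
Proof.
move=> Pi0 Qj0 PQ QP; apply/le_anti/andP; split.
  have [j Qj ->] := minover_mem g Qj0; have [i Pi fi_le] := QP j Qj.
  exact: le_trans (minover_le f Pi0 Pi) fi_le.
have [i Pi ->] := minover_mem f Pi0; have [j Qj gj_le] := PQ i Pi.
exact: le_trans (minover_le g Qj0 Qj) gj_le.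
Qed.

Lemma minover_eq0 (i0 : T) (P : pred T) (f : T -> int) : P i0 -> f i0 = 0 ->
  minover i0 P f = 0 <-> (forall j, P j -> 0 <= f j).
Proof.
move=> Pi0 fi0; split=> [min0 j Pj | f_ge0]; first by rewrite -min0 minover_le.
have [j Pj minE] := minover_mem f Pi0; apply/le_anti.
by rewrite -{1}fi0 minover_le //= minE f_ge0.
Qed.

End MinOver.

Section DirectSumSpaces.
Variables (F : finFieldType) (E1 E2 : vectType F).
Local Notation pi1 := (pi1 E1 E2).
Local Notation pi2 := (pi2 E1 E2).
Local Notation in1 := (in1 E1 E2).
Local Notation in2 := (in2 E1 E2).

Definition inl_vect (x : E1) : (E1 * E2)%type := (x, 0).
Definition inr_vect (x : E2) : (E1 * E2)%type := (0, x).

Fact inl_vect_linear : linear inl_vect.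
Proof. by move=> a x y; congr pair; rewrite /= ?scaler0 ?addr0. Qed.
Fact inr_vect_linear : linear inr_vect.
Proof. by move=> a x y; congr pair; rewrite /= ?scaler0 ?addr0. Qed.
HB.instance Definition _ :=
  GRing.isLinear.Build F E1 (E1 * E2)%type *:%R inl_vect inl_vect_linear.
HB.instance Definition _ :=
  GRing.isLinear.Build F E2 (E1 * E2)%type *:%R inr_vect inr_vect_linear.

Lemma in1E a : in1 a = (a, 0). Proof. exact: (lfunE inl_vect a). Qed.
Lemma in2E a : in2 a = (0, a). Proof. exact: (lfunE inr_vect a). Qed.
Lemma pi1E x : pi1 x = x.1. Proof. by rewrite lfunE. Qed.
Lemma pi2E x : pi2 x = x.2. Proof. by rewrite lfunE. Qed.

Lemma in1_pi1_add_in2_pi2 x : in1 (pi1 x) + in2 (pi2 x) = x.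
Proof.
by rewrite in1E in2E pi1E pi2E; case: x => a b; congr pair; rewrite /= ?addr0 ?add0r.
Qed.

Lemma limg_pi1_dsumv (A : {vspace E1}) (B : {vspace E2}) :
  (pi1 @: dsumv A B)%VS = A.
Proof.
rewrite /dsumv limgD -!limg_comp.
have -> : (pi1 \o in1 = \1)%VF by apply/lfunP => a; rewrite !lfunE /= in1E pi1E.
have -> : (pi1 \o in2 = 0)%VF by apply/lfunP => b; rewrite !lfunE /= in2E pi1E.
by rewrite lim1g lim0g addv0.
Qed.

Lemma limg_pi2_dsumv (A : {vspace E1}) (B : {vspace E2}) :
  (pi2 @: dsumv A B)%VS = B.
Proof.
rewrite /dsumv limgD -!limg_comp.
have -> : (pi2 \o in1 = 0)%VF by apply/lfunP => a; rewrite !lfunE /= in1E pi2E.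
have -> : (pi2 \o in2 = \1)%VF by apply/lfunP => b; rewrite !lfunE /= in2E pi2E.
by rewrite lim1g lim0g add0v.
Qed.

Definition dsum_hull (Y : {vspace E1 * E2}) : {vspace E1 * E2} :=
  dsumv (pi1 @: Y) (pi2 @: Y).

Lemma sub_dsum_hull (Y : {vspace E1 * E2}) : (Y <= dsum_hull Y)%VS.
Proof.
apply/subvP => y Yy; rewrite -[y]in1_pi1_add_in2_pi2.
by rewrite memv_add ?memv_img.
Qed.

Lemma dsum_hull0 : dsum_hull 0%VS = 0%VS.
Proof. by rewrite /dsum_hull /dsumv !limg0 addv0. Qed.

Lemma calT_dsum_hull (Y : {vspace E1 * E2}) : calT (dsum_hull Y).
Proof. by apply/existsP; exists (pi1 @: Y)%VS; apply/existsP; exists (pi2 @: Y)%VS. Qed.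

Lemma calTV_dsum_hull (V Y : {vspace E1 * E2}) :
  (Y <= V)%VS -> calTV V (dsum_hull Y).
Proof.
move=> YV; apply/existsP; exists (pi1 @: Y)%VS; apply/existsP.
by exists (pi2 @: Y)%VS; rewrite !limgS //=.
Qed.

End DirectSumSpaces.

Lemma qmatroid_rank0 (F : finFieldType) (vT : vectType F)
    (rho : {vspace vT} -> nat) :
  qmatroid rho -> rho 0%VS = 0%N.
Proof.
by case=> rho_le _ _; apply/eqP; rewrite -leqn0; have := rho_le 0%VS; rewrite dimv0.
Qed.

Section DirectSumRank.
Variables (F : finFieldType) (E1 E2 : vectType F).
Variables (rho1 : {vspace E1} -> nat) (rho2 : {vspace E2} -> nat).
Hypotheses (rho1_0 : rho1 0%VS = 0%N) (rho2_0 : rho2 0%VS = 0%N).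
Hypothesis rho1_mono : forall V W, (V <= W)%VS -> (rho1 V <= rho1 W)%N.
Hypothesis rho2_mono : forall V W, (V <= W)%VS -> (rho2 V <= rho2 W)%N.

Local Notation rk X := ((rho1' rho1 X + rho2' rho2 X)%:Z).
Local Notation defect X := (rk X - (\dim X)%:Z).

Lemma rk0 : rk (0%VS : {vspace E1 * E2}) = 0.
Proof. by rewrite /rho1' /rho2' !limg0 rho1_0 rho2_0. Qed.

Lemma rk_mono (X Y : {vspace E1 * E2}) : (X <= Y)%VS -> rk X <= rk Y.
Proof.
move=> XY; rewrite lez_nat leq_add // ?rho1_mono ?rho2_mono //; exact: limgS.
Qed.

Lemma rk_dsum_hull (Y : {vspace E1 * E2}) : rk (dsum_hull Y) = rk Y.
Proof. by rewrite /rho1' /rho2' limg_pi1_dsumv limg_pi2_dsumv. Qed.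

Lemma defect_ge0 (X : {vspace E1 * E2}) :
  (0 <= defect X) = ~~ calX rho1 rho2 X.
Proof. by rewrite subr_ge0 lez_nat -leqNgt. Qed.

Lemma defect0 : defect (0%VS : {vspace E1 * E2}) = 0.
Proof. by rewrite rk0 dimv0 subrr. Qed.

Lemma dsum_rank_calX (V : {vspace E1 * E2}) :
  dsum_rank rho1 rho2 V = (\dim V)%:Z +
    minover 0%VS (fun X => (X == 0%VS) || (calX rho1 rho2 X && (X <= V)%VS))
      (fun X => defect X).
Proof.
congr (_ + _); apply: eq_minover; rewrite ?sub0v ?eqxx //.
- move=> Y YV; have [calX_Y | ] := boolP (calX rho1 rho2 Y).
    by exists Y; rewrite ?calX_Y ?YV ?orbT.
  by rewrite -defect_ge0 => defect_Y_ge0; exists 0%VS; rewrite ?eqxx ?defect0.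
- move=> X /orP[/eqP-> | /andP[_ XV]]; last by exists X.
  by exists 0%VS; rewrite ?sub0v.
Qed.

Lemma dsum_rank_hull_closed (V : {vspace E1 * E2}) (Q : pred {vspace E1 * E2}) :
  (forall Y, (Y <= V)%VS -> Q (dsum_hull Y)) ->
  dsum_rank rho1 rho2 V = (\dim V)%:Z +
    minover 0%VS Q (fun X => rk X - (\dim (X :&: V))%:Z).
Proof.
move=> Q_hull; congr (_ + _); apply: eq_minover; first exact: sub0v.
- by rewrite -dsum_hull0 Q_hull ?sub0v.
- move=> Y YV; exists (dsum_hull Y); first exact: Q_hull.
  rewrite rk_dsum_hull lerD2l lerN2 lez_nat dimvS //.
  by rewrite subv_cap sub_dsum_hull.
- move=> X _; exists (X :&: V)%VS; first exact: capvSr.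
  by rewrite lerD2r rk_mono ?capvSl.
Qed.

Lemma dsum_indepP (V : {vspace E1 * E2}) :
  dsum_indep rho1 rho2 V <->
  ~ (exists X : {vspace E1 * E2}, (X <= V)%VS /\ calX rho1 rho2 X).
Proof.
have min0E :=
  minover_eq0 (P := fun X => (X <= V)%VS) (f := fun X => defect X) (sub0v V) defect0.
rewrite /dsum_indep /dsum_rank -[X in _ = X]addr0.
split=> [/addrI/min0E defect_ge0V [X [XV]] | no_calX].
  by apply/negP; rewrite -defect_ge0 defect_ge0V.
rewrite (proj2 min0E) // => X XV.
by rewrite defect_ge0; apply/negP => calX_X; apply: no_calX; exists X.
Qed.

End DirectSumRank.

Theorem proposition5p4 (F : finFieldType) (E1 E2 : vectType F)
    (rho1 : {vspace E1} -> nat) (rho2 : {vspace E2} -> nat)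
    (hM1 : qmatroid rho1) (hM2 : qmatroid rho2) :
  (forall V : {vspace E1 * E2},
    [/\ dsum_rank rho1 rho2 V =
          (\dim V)%:Z + minover 0%VS
            (fun X => (X == 0%VS) || (calX rho1 rho2 X && (X <= V)%VS))
            (fun X => (rho1' rho1 X + rho2' rho2 X)%:Z - (\dim X)%:Z),
        dsum_rank rho1 rho2 V =
          (\dim V)%:Z + minover 0%VS (calT (E1:=E1) (E2:=E2))
            (fun X => (rho1' rho1 X + rho2' rho2 X)%:Z - (\dim (X :&: V))%:Z) &
        dsum_rank rho1 rho2 V =
          (\dim V)%:Z + minover 0%VS (calTV V)
            (fun X => (rho1' rho1 X + rho2' rho2 X)%:Z - (\dim (X :&: V))%:Z)])
  /\
  (forall V : {vspace E1 * E2},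
    dsum_indep rho1 rho2 V <->
    ~ (exists X : {vspace E1 * E2}, (X <= V)%VS /\ calX rho1 rho2 X)).
Proof.
have rho1_0 := qmatroid_rank0 hM1; have rho2_0 := qmatroid_rank0 hM2.
have [_ rho1_mono _] := hM1; have [_ rho2_mono _] := hM2.
split=> V; last exact: dsum_indepP.
split; first exact: dsum_rank_calX.
  by apply: dsum_rank_hull_closed => // Y _; apply: calT_dsum_hull.
by apply: dsum_rank_hull_closed => // Y; apply: calTV_dsum_hull.
Qed.
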